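(* Let $S$ be a numerical semigroup with minimal generators $e<a_1<\dots<a_t$. Let $0\le i<e$ and write ${\rm adj}(S_i)=\{u_0<u_1<u_2<\cdots\}$. Let $j>0$, $0\le k<j$ and $\mathbf x\in\mathcal R(u_j)$. Then $|\mathbf x|<\min{\rm ord}(u_k;B^{\mathcal D})-\frac{u_j-u_k}{e}$.
   Context: A numerical semigroup is a submonoid of $(\mathbb N,+)$ with finite complement. ${\rm ord}(n;S)$ is the maximum of $\sum c_i$ over $(c_0,\dots,c_t)\in\mathbb N^{t+1}$ with $c_0e+\sum c_ia_i=n$. Let $d_i=a_i-e$, $B=\langle e,d_1,\dots,d_t\rangle$, $\mathcal D=(e,d_1,\dots,d_t)$. A $B^{\mathcal D}$-factorization of $b$ is $\mathbf x=(x_0,\dots,x_t)\in\mathbb N^{t+1}$ with $x_0e+\sum x_id_i=b$, of length $|\mathbf x|=\sum x_i$. $\min{\rm ord}(b;B^{\mathcal D})$ is the minimal such length, and $\mathcal P(b)$ is the set of all of them. $S_i=\{s\in S:s\equiv i\pmod e\}$ and ${\rm adj}(S_i)=\{s-{\rm ord}(s;S)e:s\in S_i\}$. Define $\mathcal R(u_0)=\mathcal P(u_0)$ and, for $j>0$, $\mathcal R(u_j)=\{\mathbf x\in\mathcal P(u_j):|\mathbf x|<\min{\rm ord}(u_{j-1};B^{\mathcal D})-\frac{u_j-u_{j-1}}{e}\}$. *)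

From mathcomp Require Import all_boot all_algebra.
Set Implicit Arguments. Unset Strict Implicit. Unset Printing Implicit Defensive.
Import GRing.Theory Num.Theory.

(* Generators: e = a_0 and a_1 < ... < a_t given by a : nat -> nat
   (the value a 0 is ignored).  Coefficient vectors in N^{t+1} are
   represented by functions c : nat -> nat, only c 0 .. c t matter. *)

Definition eval_S (e : nat) (a : nat -> nat) (t : nat) (c : nat -> nat) : nat :=
  c 0 * e + \sum_(1 <= i < t.+1) c i * a i.

Definition len (t : nat) (c : nat -> nat) : nat := \sum_(i < t.+1) c i.

Definition inS e a t (n : nat) : Prop := exists c, eval_S e a t c = n.

Definition numerical e a t : Prop := exists N, forall n, N <= n -> inS e a t n.

Definition gen e (a : nat -> nat) (i : nat) : nat := if i is 0 then e else a i.
Definition minimal_gens e a t : Prop :=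
  [/\ 0 < e,
      forall i, 1 <= i <= t -> gen e a i.-1 < a i
    & forall i, i <= t -> ~ exists c : nat -> nat,
        c i = 0 /\ \sum_(k < t.+1) c k * gen e a k = gen e a i].

Definition is_ord e a t (n m : nat) : Prop :=
  (exists c, eval_S e a t c = n /\ len t c = m) /\
  (forall c, eval_S e a t c = n -> len t c <= m).

(* d_i = a_i - e ; B^D-factorizations: x_0 e + sum x_i d_i = b *)
Definition eval_B e (a : nat -> nat) (t : nat) (x : nat -> nat) : nat :=
  x 0 * e + \sum_(1 <= i < t.+1) x i * (a i - e).

Definition inP e a t (b : nat) (x : nat -> nat) : Prop := eval_B e a t x = b.

Definition is_minord e a t (b m : nat) : Prop :=
  (exists x, inP e a t b x /\ len t x = m) /\
  (forall x, inP e a t b x -> m <= len t x).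

Definition in_adj e a t (i v : nat) : Prop :=
  exists s m, [/\ inS e a t s, s %% e = i, is_ord e a t s m & v = s - m * e].

Definition adj_enum e a t (i : nat) (u : nat -> nat) (j : nat) : Prop :=
  [/\ forall m, m <= j -> in_adj e a t i (u m),
      forall m, m < j -> u m < u m.+1
    & forall v, in_adj e a t i v -> v <= u j -> exists2 m, m <= j & v = u m].

Definition inR e a t (u : nat -> nat) (j : nat) (x : nat -> nat) : Prop :=
  inP e a t (u j) x /\
  (j = 0 \/ exists m, is_minord e a t (u j.-1) m /\
     ((len t x)%:R < m%:R - ((u j)%:R - (u j.-1)%:R) / e%:R :> rat)%R).

From mathcomp Require Import all_boot all_algebra.
From mathcomp Require Import zify ring lra.
From Stdlib Require Import Classical.
From Stdlib Require Wf_nat.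
Import GRing.Theory Num.Theory.

Set Implicit Arguments.
Unset Strict Implicit.
Unset Printing Implicit Defensive.

(* Writing an element of adj(S_i) as w = s - L e with L = ord(s), deleting
   the e-coefficient of a maximal factorization of s gives a B-factorization
   of w of length at most L.  Conversely, a B-factorization y of
   v = w - q e (q > 0) lifts, by padding with copies of e, to a factorization
   of s = v + (q + L) e, so maximality of L forces |y| >= q + L.  Hence
   min ord(u_{j-1}) + (u_{j-1} - u_k)/e <= min ord(u_k), and the defining
   inequality of R(u_j) propagates from u_{j-1} down to u_k. *)

Lemma minimal_gens_ge e a t :
  minimal_gens e a t -> forall i, 1 <= i <= t -> e <= a i.
Proof.
case=> _ gen_lt _; elim=> [//|[|n] IHn] /andP[_ le_n_t].
- exact/ltnW/(gen_lt 1).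
- have := gen_lt n.+2 ltac:(lia); have := IHn ltac:(lia); rewrite /=; lia.
Qed.

Lemma is_minord_exists e a t b :
  (exists x, inP e a t b x) -> exists m, is_minord e a t b m.
Proof.
move=> [x0 Px0].
pose P m := exists x, inP e a t b x /\ len t x = m.
have [m [[Pm m_least] _]] :=
  Wf_nat.dec_inh_nat_subset_has_unique_least_element P (fun m => classic (P m))
    (ex_intro _ _ (ex_intro _ x0 (conj Px0 erefl))).
exists m; split=> // x Px; apply/leP/m_least.
by exists x.
Qed.

Lemma adj_enum_le e a t i u j :
  adj_enum e a t i u j -> {in [pred n | n <= j] &, {homo u : m n / m <= n}}.
Proof.
case=> _ u_lt _; apply: homo_leq_in => [//|y x z|m n _ le_n_j k|m _ lt_m_j].
- exact: leq_trans.
- by rewrite !inE => /andP[_ /ltnW/leq_trans]; apply.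
- exact/ltnW/u_lt.
Qed.

Lemma mod_eq_addn_mul d m n :
  m <= n -> m = n %[mod d] -> exists q, m + q * d = n.
Proof.
move=> le_mn /eqP eq_mn; exists ((n - m) %/ d).
by rewrite divnK ?subnKC // -eqn_mod_dvd // eq_sym.
Qed.

Definition with0 (x : nat -> nat) (n : nat) : nat -> nat :=
  fun i => if i is 0 then n else x i.

Section Factorizations.

Variables (e : nat) (a : nat -> nat) (t : nat).
Hypothesis e_le_gen : forall i, 1 <= i <= t -> e <= a i.

Definition eval_tail (x : nat -> nat) : nat :=
  \sum_(1 <= i < t.+1) x i * (a i - e).

Definition len_tail (x : nat -> nat) : nat := \sum_(1 <= i < t.+1) x i.

Lemma len_head_tail x : len t x = x 0 + len_tail x.
Proof. by rewrite /len -(big_mkord xpredT) big_ltn. Qed.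

Lemma eval_B_tail x : eval_B e a t x = x 0 * e + eval_tail x.
Proof. by []. Qed.

Lemma eval_S_tail c : eval_S e a t c = eval_tail c + len t c * e.
Proof.
rewrite /eval_S len_head_tail mulnDl addnCA big_distrl -big_split /=.
congr (_ + _); apply: eq_big_nat => i /e_le_gen le_e_ai.
by rewrite -mulnDr subnK.
Qed.

Lemma eval_tail_with0 x n : eval_tail (with0 x n) = eval_tail x.
Proof. by apply: eq_big_nat => -[|i]. Qed.

Lemma len_tail_with0 x n : len_tail (with0 x n) = len_tail x.
Proof. by apply: eq_big_nat => -[|i]. Qed.

Lemma is_ord_factorization w L :
  is_ord e a t (w + L * e) L -> exists2 x, inP e a t w x & len t x <= L.
Proof.
case=> -[c [eval_c len_c]] _; exists (with0 c 0).
- rewrite /inP eval_B_tail eval_tail_with0 /= mul0n add0n.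
  by apply/eqP; rewrite -(eqn_add2r (len t c * e)) -eval_S_tail eval_c len_c.
- by rewrite -len_c !len_head_tail len_tail_with0 leq_addl.
Qed.

(* Witness: y read as an S-factorization, its e-coefficient raised so that its
   length is y 0 + n. *)
Lemma is_ord_ge_padding s L v y n :
  is_ord e a t s L -> inP e a t v y -> v + n * e = s ->
  len_tail y <= y 0 + n -> y 0 + n <= L.
Proof.
move=> [_ ord_max] Py def_s le_tail; set c := with0 y (y 0 + n - len_tail y).
have len_c : len t c = y 0 + n by rewrite len_head_tail len_tail_with0 subnK.
rewrite -len_c; apply: ord_max.
rewrite -def_s -Py eval_S_tail eval_tail_with0 len_c eval_B_tail; lia.
Qed.

Lemma is_ord_len_lower w L v y q :
  is_ord e a t (w + L * e) L -> inP e a t v y -> v + q * e = w -> 0 < q ->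
  q + L <= len t y.
Proof.
move=> ord_L Py def_w q_gt0; rewrite leqNgt; apply/negP => lt_len.
have le_tail : len_tail y <= y 0 + (q + L).
  by move: lt_len; rewrite len_head_tail; lia.
have def_s : v + (q + L) * e = w + L * e by rewrite -def_w mulnDl addnA.
have := is_ord_ge_padding ord_L Py def_s le_tail; lia.
Qed.

Lemma in_adjP i w :
  in_adj e a t i w -> exists2 L, w %% e = i & is_ord e a t (w + L * e) L.
Proof.
case=> s [L [_ s_mod ord_L ->]].
have le_Le_s : L * e <= s.
  by case: ord_L => -[c [<- <-]] _; rewrite eval_S_tail leq_addl.
exists L; last by rewrite subnK.
by rewrite -s_mod -[in RHS](subnK le_Le_s) addnC modnMDl.
Qed.

Lemma in_adj_minord_exists i w :
  in_adj e a t i w -> exists m, is_minord e a t w m.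
Proof.
case/in_adjP=> L _ /is_ord_factorization[x Px _].
by apply: is_minord_exists; exists x.
Qed.

Lemma minord_addn_le i w v q m M :
  in_adj e a t i w -> is_minord e a t w m -> is_minord e a t v M ->
  v + q * e = w -> m + q <= M.
Proof.
case/in_adjP=> L _ ord_L [_ m_min] [[y [Py <-]] _] def_w.
have [q0|q_gt0] := posnP q.
  by rewrite q0 addn0 m_min // /inP -def_w q0 mul0n addn0.
have [x Px len_x] := is_ord_factorization ord_L.
have := is_ord_len_lower ord_L Py def_w q_gt0.
by have := m_min x Px; lia.
Qed.

End Factorizations.

Theorem lemma3p8 (e : nat) (a : nat -> nat) (t : nat)
  (Hmin : minimal_gens e a t) (Hnum : numerical e a t)
  (i : nat) (Hi : i < e) (u : nat -> nat) (j k : nat)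
  (Hu : adj_enum e a t i u j) (Hj : 0 < j) (Hk : k < j)
  (x : nat -> nat) (Hx : inR e a t u j x) :
  exists m, is_minord e a t (u k) m /\
    ((len t x)%:R < m%:R - ((u j)%:R - (u k)%:R) / e%:R :> rat)%R.
Proof.
have e_le_gen := minimal_gens_ge Hmin.
have e_gt0 : 0 < e by case: Hmin.
case: Hx => _ [j0|[m [minord_m len_x_lt]]]; first by rewrite j0 in Hj.
case: (Hu) => u_adj _ _.
have [M minord_M] := in_adj_minord_exists e_le_gen (u_adj k (ltnW Hk)).
have u_mod n : n <= j -> u n %% e = i.
  by move=> le_n_j; have [] := in_adjP e_le_gen (u_adj n le_n_j).
have le_uk_uj1 : u k <= u j.-1.
  by apply: (adj_enum_le Hu); rewrite ?inE ?leq_pred ?(ltnW Hk) // -ltnS prednK.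
have [q def_u] : exists q, u k + q * e = u j.-1.
  by apply: mod_eq_addn_mul le_uk_uj1 _; rewrite (u_mod k (ltnW Hk)) u_mod ?leq_pred.
have := minord_addn_le e_le_gen (u_adj _ (leq_pred j)) minord_m minord_M def_u.
rewrite -(ler_nat rat) natrD => le_mq_M.
exists M; split=> //.
have e_neq0 : (e%:R != 0 :> rat)%R by rewrite pnatr_eq0 -lt0n.
have -> : (((u j)%:R - (u k)%:R) / e%:R =
           ((u j)%:R - (u j.-1)%:R) / e%:R + q%:R :> rat)%R.
  by rewrite -def_u natrD natrM; field.
lra.
Qed.
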